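(* Consider $N$ agents. For each agent $k$ let $R_{u,k}$ be an $M\times M$ Hermitian positive definite matrix, $c_k\in(0,\infty)$, $\delta_k,r_k\in(0,1)$, and $\chi_k\triangleq\frac{1-\delta_kr_k}{\delta_k(1-r_k)}$, $\chi_{\min}\triangleq\min_k\chi_k$. Let $\mu>0$ with $\mu\lambda_{\max}(R_{u,k})\le1$ for all $k$, and $\rho_{\max}\triangleq\max_k\lambda_{\max}(I-\mu R_{u,k})$. For each $k$ and time $i$, let $\widetilde{\boldsymbol w}_{k,i-1}$ be a random vector in $\mathbb{C}^M$, let $\bar{\boldsymbol b}_k(i)\triangleq\|(I-\mu R_{u,k})\widetilde{\boldsymbol w}_{k,i-1}\|^2_{R_{u,k}}$, and for each neighbor $\ell$ let $\boldsymbol\theta_{\ell k}(i)$ be a random variable with values in $[\varepsilon,1]$ for some $\varepsilon\in(0,1)$. Agent $k$'s action toward $\ell$ is $\boldsymbol a_{k\ell}(i)=1$ if $\bar{\boldsymbol b}_k(i)\boldsymbol\theta_{\ell k}(i)>c_k\chi_k$ and $\boldsymbol a_{k\ell}(i)=0$ otherwise. Suppose there exist a constant $\eta>0$ and an index $i_0$ such that $\mathbb{E}\|\widetilde{\boldsymbol w}_{k,i}\|^2_{R_{u,k}}\le\eta\mu$ for all $k$ and all $i\ge i_0$. Then for every agent $k$, every neighbor $\ell$ and every $i\ge i_0+1$, $${\rm Prob}\{\boldsymbol a_{k\ell}(i)=1\}\le\min\Big\{\frac{c^o}{c_k},1\Big\},\qquad c^o\triangleq\frac{\eta\mu\rho_{\max}^2}{\chi_{\min}},$$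 where $c^o$ does not depend on $c_k$.
   Context: For a Hermitian positive definite $R$, $\|x\|^2_R\triangleq x^*Rx$. In the paper, $\widetilde{\boldsymbol w}_{k,i-1}=w^o-\boldsymbol w_{k,i-1}$ is agent $k$'s estimation error in a diffusion LMS network, $\mu$ the step-size, $R_{u,k}$ the regressor covariance, $c_k$ the per-transmission communication cost, $\delta_k$ a discount factor, $r_k$ the reputation smoothing factor, $\boldsymbol\theta_{\ell k}(i)$ the reputation score agent $k$ keeps about $\ell$ (floored at $\varepsilon$), and the action rule is the agent's (risk-taking) best response rule; the hypothesis on $\eta$ is the paper's steady-state mean-square bound (''after sufficient iterations''). *)

From HB Require Import structures.
From mathcomp Require Import all_boot all_order all_algebra.
From mathcomp Require Import all_classical all_reals all_analysis.
From mathcomp Require Import complex.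
Set Implicit Arguments. Unset Strict Implicit. Unset Printing Implicit Defensive.
Import Order.TTheory GRing.Theory Num.Theory.
Local Open Scope ring_scope.
Local Open Scope classical_set_scope.

Definition ctr (R : realType) m n (A : 'M[R[i]]_(m, n)) : 'M[R[i]]_(n, m) :=
  map_mx (@conjc R) A^T.

Definition hpd (R : realType) M (A : 'M[R[i]]_M) : Prop :=
  ctr A = A /\ forall x : 'cV[R[i]]_M, x != 0 -> 0 < (ctr x *m A *m x) 0 0.

(* weighted squared norm ||x||^2_A = x^* A x  (real part; it is real for A Hermitian) *)
Definition wnorm2 (R : realType) M (A : 'M[R[i]]_M) (x : 'cV[R[i]]_M) : R :=
  complex.Re ((ctr x *m A *m x) 0 0).

(* largest eigenvalue of a Hermitian matrix (its eigenvalues are real) *)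
Definition lambda_max (R : realType) M (A : 'M[R[i]]_M) : R :=
  sup [set a : R | eigenvalue A (a%:C)%C].

Definition chi (R : realType) (delta r : R) : R :=
  (1 - delta * r) / (delta * (1 - r)).

(* bbar_k(i) = || (I - mu R_{u,k}) wtilde_{k,i-1} ||^2_{R_{u,k}} ;
   [w j] is the error vector wtilde_{k,j} at time j. *)
Definition bbar (R : realType) M (mu : R) (Ru : 'M[R[i]]_M)
    (w : nat -> 'cV[R[i]]_M) (i : nat) : R :=
  wnorm2 Ru ((1%:M - (mu%:C)%C *: Ru) *m w i.-1).

Definition action (R : realType) M (mu : R) (Ru : 'M[R[i]]_M)
    (w : nat -> 'cV[R[i]]_M) (theta c chik : R) (i : nat) : nat :=
  if bbar mu Ru w i * theta > c * chik then 1%N else 0%N.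

(* Diagonalise R_{u,k} = Q^* D Q with Q unitary and D > 0.  Then
   I - mu R_{u,k} = Q^* (I - mu D) Q with 0 <= 1 - mu d_j <= rho_max, so in the
   coordinates Q x the weighted norm contracts termwise:
   bbar_k(i) <= rho_max^2 ||wtilde_{k,i-1}||^2_{R_{u,k}}.  Since theta <= 1, the
   event a_{kl}(i) = 1 forces rho_max^2 ||wtilde_{k,i-1}||^2_{R_{u,k}} > c_k chi_k
   >= c_k chi_min, and Markov's inequality together with the mean-square bound
   eta mu yields the claim. *)

From HB Require Import structures.
From mathcomp Require Import all_boot all_order all_algebra.
From mathcomp Require Import all_classical all_reals all_analysis.
From mathcomp Require Import complex measurable_realfun.
From mathcomp Require Import ring.
Import Order.TTheory GRing.Theory Num.Theory.
Local Open Scope ring_scope.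
Local Open Scope classical_set_scope.
Set Implicit Arguments. Unset Strict Implicit. Unset Printing Implicit Defensive.

Section ComplexParts.
Variable R : realType.
Implicit Types x y : R[i].

Lemma Re_addc x y : complex.Re (x + y) = complex.Re x + complex.Re y.
Proof. by case: x; case: y. Qed.

Lemma Im_addc x y : complex.Im (x + y) = complex.Im x + complex.Im y.
Proof. by case: x; case: y. Qed.

Lemma Re_mulc x y :
  complex.Re (x * y) = complex.Re x * complex.Re y - complex.Im x * complex.Im y.
Proof. by case: x; case: y. Qed.

Lemma Im_mulc x y :
  complex.Im (x * y) = complex.Re x * complex.Im y + complex.Im x * complex.Re y.
Proof. by case: x => a b; case: y => c d /=; rewrite addrC. Qed.

Lemma Re_conjc x : complex.Re (conjc x) = complex.Re x.
Proof. by case: x. Qed.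

Lemma Im_conjc x : complex.Im (conjc x) = - complex.Im x.
Proof. by case: x. Qed.

Lemma Re_sumc (I : Type) (s : seq I) (P : pred I) (F : I -> R[i]) :
  complex.Re (\sum_(j <- s | P j) F j) = \sum_(j <- s | P j) complex.Re (F j).
Proof. exact: (big_morph _ Re_addc). Qed.

Lemma Re_conjc_mul_real (a : R) y :
  complex.Re (conjc y * (a%:C)%C * y) = a * (complex.Re y ^+ 2 + complex.Im y ^+ 2).
Proof. by case: y => u v /=; ring. Qed.

End ComplexParts.

Section DiagonalForms.
Variable R : realType.
Local Notation C := R[i].

Lemma ctrM m n p (A : 'M[C]_(m, n)) (B : 'M[C]_(n, p)) :
  ctr (A *m B) = ctr B *m ctr A.
Proof. by rewrite /ctr trmx_mul map_mxM. Qed.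

Definition realdiag n (d : 'I_n -> R) : 'M[C]_n := diag_mx (\row_j (d j)%:C)%C.

Lemma ctr_realdiag n (d : 'I_n -> R) : ctr (realdiag d) = realdiag d.
Proof.
rewrite /ctr tr_diag_mx map_diag_mx; congr diag_mx.
by apply/rowP => j; rewrite !mxE; exact: conjc_real.
Qed.

Lemma realdiag_mul n (d e : 'I_n -> R) :
  realdiag d *m realdiag e = realdiag (fun j => d j * e j).
Proof.
apply/matrixP => i j; rewrite mul_diag_mx !mxE.
by case: eqP => [->|_]; rewrite ?mulr1n ?mulr0n ?mulr0 // rmorphM.
Qed.

Lemma realdiag_1subZ n (a : R) (d : 'I_n -> R) :
  realdiag (fun j => 1 - a * d j) = 1%:M - (a%:C)%C *: realdiag d.
Proof.
apply/matrixP => i j; rewrite !mxE.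
by case: eqP => [->|_]; rewrite ?mulr1n ?mulr0n ?mulr0 ?subr0 // rmorphB rmorphM.
Qed.

Lemma ctr_conj_realdiag n (Q : 'M[C]_n) (d : 'I_n -> R) :
  ctr (ctr Q *m realdiag d *m Q) = ctr Q *m realdiag d *m Q.
Proof.
rewrite !ctrM ctr_realdiag mulmxA; congr (_ *m _ *m _).
by apply/matrixP => i j; rewrite !mxE conjcK.
Qed.

Lemma quad_conj_diag n (Q : 'M[C]_n) (e : 'rV[C]_n) (x : 'cV[C]_n) :
  (ctr x *m (ctr Q *m diag_mx e *m Q) *m x) 0 0 =
  \sum_j conjc ((Q *m x) j 0) * e 0 j * (Q *m x) j 0.
Proof.
have -> : ctr x *m (ctr Q *m diag_mx e *m Q) *m x =
    ctr (Q *m x) *m diag_mx e *m (Q *m x) by rewrite ctrM !mulmxA.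
by rewrite mul_mx_diag mxE; apply: eq_bigr => j _; rewrite !mxE.
Qed.

Lemma wnorm2_conj_realdiag n (Q : 'M[C]_n) (d : 'I_n -> R) (x : 'cV[C]_n) :
  wnorm2 (ctr Q *m realdiag d *m Q) x =
  \sum_j d j * (complex.Re ((Q *m x) j 0) ^+ 2 + complex.Im ((Q *m x) j 0) ^+ 2).
Proof.
rewrite /wnorm2 quad_conj_diag Re_sumc.
by apply: eq_bigr => j _; rewrite [_ 0 j]mxE Re_conjc_mul_real.
Qed.

End DiagonalForms.

Section FiniteBounds.
Variables (R : realType) (T : finType) (f : T -> R).

Lemma has_ubound_range : has_ubound (range f).
Proof.
exists (\sum_j `|f j|) => _ [k _ <-]; apply: le_trans (ler_norm _) _.
by rewrite (bigD1 k) //= lerDl sumr_ge0.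
Qed.

Lemma has_lbound_range : has_lbound (range f).
Proof.
exists (- \sum_j `|f j|) => _ [k _ <-]; rewrite lerNl.
apply: le_trans (ler_norm _) _.
by rewrite normrN (bigD1 k) //= lerDl sumr_ge0.
Qed.

Lemma le_sup_sub_range (A : set R) a : A `<=` range f -> A a -> a <= sup A.
Proof.
move=> Af Aa; apply: ub_le_sup Aa.
by have [b ub] := has_ubound_range; exists b => x /Af /ub.
Qed.

Lemma le_sup_range k : f k <= sup (range f).
Proof. by apply: le_sup_sub_range => //; exists k. Qed.

Lemma ge_inf_range k : inf (range f) <= f k.
Proof. by apply: (ge_inf has_lbound_range); exists k. Qed.

End FiniteBounds.

Section UnitaryConjugation.
Variables (R : realType) (n : nat) (Q : 'M[R[i]]_n).
Hypotheses (QQt : Q *m ctr Q = 1%:M) (QtQ : ctr Q *m Q = 1%:M).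

Lemma mul_conj_realdiag (d e : 'I_n -> R) :
  (ctr Q *m realdiag d *m Q) *m (ctr Q *m realdiag e *m Q) =
  ctr Q *m realdiag (fun j => d j * e j) *m Q.
Proof.
by rewrite !mulmxA -(mulmxA _ Q) QQt mulmx1 -(mulmxA _ (realdiag d)) realdiag_mul.
Qed.

Lemma eigenvalue_conj_diagP (e : 'rV[R[i]]_n) a :
  reflect (exists j, a = e 0 j) (eigenvalue (ctr Q *m diag_mx e *m Q) a).
Proof.
apply: (iffP eigenvalueP) => [[v ve v_neq0] | [j ->]].
- have ue : v *m ctr Q *m diag_mx e = a *: (v *m ctr Q).
    have := congr1 (mulmx^~ (ctr Q)) ve; rewrite /= -scalemxAl => <-.
    by rewrite !mulmxA -(mulmxA _ Q) QQt mulmx1.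
  have [j uj_neq0] : exists j, (v *m ctr Q) 0 j != 0.
    apply/existsP; apply: contraNT v_neq0 => /existsPn u0.
    have vQ0 : v *m ctr Q = 0 by apply/rowP => k; rewrite [RHS]mxE; exact/eqP/negPn/u0.
    by rewrite -[v]mulmx1 -QtQ mulmxA vQ0 mul0mx.
  exists j; apply: (mulIf uj_neq0).
  by move/rowP/(_ j): ue; rewrite mul_mx_diag !mxE mulrC.
- exists (delta_mx 0 j *m Q).
    rewrite !mulmxA -(mulmxA _ Q) QQt mulmx1 scalemxAl; congr (_ *m _).
    apply/rowP => k; rewrite mul_mx_diag !mxE eqxx mulrC.
    by case: (k =P j) => [->|_] /=; rewrite ?mulr0.
  apply: contra_neq (oner_neq0 (R[i])) => vQ0.
  have := congr1 (fun v => (v *m ctr Q) 0 j) vQ0.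
  by rewrite /= -mulmxA QQt mulmx1 mul0mx !mxE !eqxx.
Qed.

Lemma le_lambda_max_conj_realdiag (d : 'I_n -> R) j :
  d j <= lambda_max (ctr Q *m realdiag d *m Q).
Proof.
apply: (@le_sup_sub_range _ _ d) => [a /eigenvalue_conj_diagP [k]|].
  by rewrite mxE => /complexI ->; exists k.
by apply/eigenvalue_conj_diagP; exists j; rewrite mxE.
Qed.

End UnitaryConjugation.

Section HermitianPositiveDefinite.
Variables (R : realType) (n : nat) (H : 'M[R[i]]_n).
Hypothesis H_hpd : hpd H.

Lemma wnorm2_ge0 (x : 'cV[R[i]]_n) : 0 <= wnorm2 H x.
Proof.
have [->|x_neq0] := eqVneq x 0; first by rewrite /wnorm2 mulmx0 mxE.
by case: H_hpd => _ /(_ x x_neq0); rewrite ltcE => /andP[_ /ltW].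
Qed.

Lemma hpd_spectral : exists (Q : 'M[R[i]]_n) (d : 'I_n -> R),
  [/\ Q *m ctr Q = 1%:M, ctr Q *m Q = 1%:M,
      H = ctr Q *m realdiag d *m Q & forall j, 0 < d j].
Proof.
case: H_hpd => H_herm H_pos; set Q := spectralmx H; set e := spectral_diag H.
have Q_unitary : Q \is unitarymx := spectral_unitarymx H.
have QQt : Q *m ctr Q = 1%:M := unitarymxP Q_unitary.
have Qt : ctr Q = invmx Q by rewrite invmx_unitary.
have QtQ : ctr Q *m Q = 1%:M by rewrite Qt mulVmx // spectral_unit.
have He : H = ctr Q *m diag_mx e *m Q.
  rewrite Qt; apply/orthomx_spectralP/normalmxP.
  by change (H *m ctr H = ctr H *m H); rewrite H_herm.
have e_gt0 j : 0 < e 0 j.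
  pose y := ctr Q *m delta_mx j 0 : 'cV_n.
  have Qy : Q *m y = delta_mx j 0 by rewrite mulmxA QQt mul1mx.
  have y_neq0 : y != 0.
    apply: contra_neq (oner_neq0 R[i]) => y0.
    by move/matrixP/(_ j 0): Qy; rewrite y0 mulmx0 !mxE !eqxx.
  have := H_pos y y_neq0; rewrite He quad_conj_diag Qy (bigD1 j) //= big1.
    by rewrite !mxE !eqxx mulr1n rmorph1 mul1r mulr1 addr0.
  by move=> k /negPf kj; rewrite !mxE kj /= mulr0.
exists Q, (fun j => complex.Re (e 0 j)); split => // [|j].
  rewrite He; congr (_ *m diag_mx _ *m _); apply/rowP => j.
  by rewrite mxE RRe_real // gtr0_real.
by have := e_gt0 j; rewrite ltcE => /andP[].
Qed.

Lemma wnorm2_contraction (mu rho : R) (x : 'cV[R[i]]_n) :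
  0 <= mu -> mu * lambda_max H <= 1 -> lambda_max (1%:M - (mu%:C)%C *: H) <= rho ->
  wnorm2 H ((1%:M - (mu%:C)%C *: H) *m x) <= rho ^+ 2 * wnorm2 H x.
Proof.
have [Q [d [QQt QtQ -> d_gt0]]] := hpd_spectral.
set e := fun j => 1 - mu * d j.
have -> : 1%:M - (mu%:C)%C *: (ctr Q *m realdiag d *m Q) = ctr Q *m realdiag e *m Q.
  by rewrite realdiag_1subZ mulmxBr mulmxBl mulmx1 QtQ -scalemxAr -scalemxAl.
move=> mu_ge0 mu_lmax e_lmax.
have e_ge0 j : 0 <= e j.
  rewrite subr_ge0; apply: le_trans mu_lmax.
  exact: (ler_wpM2l mu_ge0 (le_lambda_max_conj_realdiag QQt QtQ d j)).
have e_le j : e j <= rho := le_trans (le_lambda_max_conj_realdiag QQt QtQ e j) e_lmax.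
rewrite (_ : wnorm2 _ (_ *m x) =
    wnorm2 (ctr Q *m realdiag (fun j => e j * d j * e j) *m Q) x); last first.
  rewrite -!(mul_conj_realdiag QQt) /wnorm2 ctrM ctr_conj_realdiag.
  by rewrite !mulmxA.
rewrite !wnorm2_conj_realdiag mulr_sumr; apply: ler_sum => j _.
set s := _ + _; have s_ge0 : 0 <= s by rewrite addr_ge0 ?sqr_ge0.
have -> : e j * d j * e j * s = e j ^+ 2 * (d j * s) by ring.
rewrite ler_wpM2r ?mulr_ge0 ?(ltW (d_gt0 j)) // !expr2.
exact: ler_pM (e_ge0 j) (e_ge0 j) (e_le j) (e_le j).
Qed.

End HermitianPositiveDefinite.

Section ComplexMeasurability.
Context (R : realType) (d : measure_display) (T : measurableType d).

Definition measurable_cfun (f : T -> R[i]) :=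
  measurable_fun setT (fun x => complex.Re (f x)) /\
  measurable_fun setT (fun x => complex.Im (f x)).

Lemma measurable_cfun_cst (a : R[i]) : measurable_cfun (fun=> a).
Proof. by split; exact: measurable_cst. Qed.

Lemma measurable_cfunD f g : measurable_cfun f -> measurable_cfun g ->
  measurable_cfun (fun x => f x + g x).
Proof.
move=> [mf1 mf2] [mg1 mg2]; split.
  by under eq_fun do rewrite Re_addc; exact: measurable_funD.
by under eq_fun do rewrite Im_addc; exact: measurable_funD.
Qed.

Lemma measurable_cfunM f g : measurable_cfun f -> measurable_cfun g ->
  measurable_cfun (fun x => f x * g x).
Proof.
move=> [mf1 mf2] [mg1 mg2]; split.
  by under eq_fun do rewrite Re_mulc; apply: measurable_funB; exact: measurable_funM.
by under eq_fun do rewrite Im_mulc; apply: measurable_funD; exact: measurable_funM.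
Qed.

Lemma measurable_cfun_conj f : measurable_cfun f -> measurable_cfun (fun x => conjc (f x)).
Proof.
move=> [mf1 mf2]; split; first by under eq_fun do rewrite Re_conjc.
by under eq_fun do rewrite Im_conjc; exact: measurable_funN.
Qed.

Lemma measurable_cfun_sum (I : Type) (s : seq I) (P : pred I) (F : I -> T -> R[i]) :
  (forall j, measurable_cfun (F j)) ->
  measurable_cfun (fun x => \sum_(j <- s | P j) F j x).
Proof.
move=> mF; elim: s => [|j s IHs].
  by under eq_fun do rewrite big_nil; exact: measurable_cfun_cst.
under eq_fun do rewrite big_cons.
by case: (P j) => //; exact: measurable_cfunD.
Qed.

Definition measurable_cvfun n (v : T -> 'cV[R[i]]_n) :=
  forall j, measurable_cfun (fun x => v x j 0).

Lemma measurable_cvfun_mull n (B : 'M[R[i]]_n) (v : T -> 'cV[R[i]]_n) :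
  measurable_cvfun v -> measurable_cvfun (fun x => B *m v x).
Proof.
move=> mv j; under eq_fun do rewrite mxE.
apply: measurable_cfun_sum => k.
by apply: measurable_cfunM; [exact: measurable_cfun_cst | exact: mv].
Qed.

Lemma measurable_wnorm2 n (H : 'M[R[i]]_n) (v : T -> 'cV[R[i]]_n) :
  measurable_cvfun v -> measurable_fun setT (fun x => wnorm2 H (v x)).
Proof.
move=> mv; suff [] : measurable_cfun (fun x => (ctr (v x) *m H *m v x) 0 0) by [].
under eq_fun do rewrite mxE.
apply: measurable_cfun_sum => j; apply: measurable_cfunM; last exact: mv.
under eq_fun do rewrite mxE.
apply: measurable_cfun_sum => k; apply: measurable_cfunM; last exact: measurable_cfun_cst.
by under eq_fun do rewrite !mxE; exact: measurable_cfun_conj.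
Qed.

End ComplexMeasurability.

Section MarkovBound.
Context (R : realType) (d : measure_display) (T : measurableType d).
Local Open Scope ereal_scope.

Lemma markov_le_integral (mu : {measure set T -> \bar R}) (E : set T) (f : T -> R) (a : R) :
  measurable E -> measurable_fun setT f -> (0 <= a)%R -> (forall x, 0 <= f x)%R ->
  (forall x, E x -> a <= f x)%R -> a%:E * mu E <= \int[mu]_x (f x)%:E.
Proof.
move=> mE mf a_ge0 f_ge0 aEf.
have mind : measurable_fun setT (\1_E : T -> R) by exact: measurable_indic.
rewrite -(setIT E) -integral_indic // -ge0_integralZl_EFin //; last first.
  exact/measurable_EFinP.
apply: ge0_le_integral => //.
- by move=> x _; rewrite mule_ge0 ?lee_fin ?indic_ge0.
- by apply/measurable_EFinP/measurable_funM => //; exact: measurable_cst.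
- exact/measurable_EFinP.
- move=> x _; rewrite -EFinM lee_fin /indic.
  by case: (boolP (x \in E)) => [/set_mem/aEf|_]; rewrite ?mulr1 ?mulr0.
Qed.

Lemma probability_gt_le (P : probability T R) (g f : T -> R) (a b : R) :
  (0 < a)%R -> measurable_fun setT g -> measurable_fun setT f ->
  (forall x, 0 <= f x)%R -> (forall x, g x <= f x)%R ->
  \int[P]_x (f x)%:E <= b%:E ->
  P [set x | a < g x]%R <= (Num.min (b / a) 1)%:E.
Proof.
move=> a_gt0 mg mf f_ge0 gf int_le.
set E := [set x | a < g x]%R.
have mE : measurable E.
  rewrite (_ : E = g @^-1` `]a, +oo[%classic); first by rewrite -[_ @^-1` _]setTI; exact: mg.
  by apply/seteqP; split => x; rewrite /= in_itv /= andbT.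
have PE : P E = (fine (P E))%:E by rewrite fineK // fin_num_measure.
have p_le1 : (fine (P E) <= 1)%R by rewrite -lee_fin -PE probability_le1.
have ap_le : (a * fine (P E) <= b)%R.
  rewrite -lee_fin EFinM -PE; apply: le_trans int_le.
  apply: markov_le_integral => // [|x ax]; first exact: ltW.
  exact: le_trans (ltW ax) (gf x).
by rewrite PE lee_fin le_min p_le1 andbT ler_pdivlMr // mulrC.
Qed.

End MarkovBound.

Lemma chi_ge1 (R : realType) (delta r : R) : 0 < delta <= 1 -> r < 1 -> 1 <= chi delta r.
Proof.
move=> /andP[delta_gt0 delta_le1] r_lt1.
rewrite /chi ler_pdivlMr ?mulr_gt0 ?subr_gt0 // mul1r.
by rewrite mulrBr mulr1 lerD2r.
Qed.

Lemma action_eq1 (R : realType) M (mu : R) (Ru : 'M[R[i]]_M) w (theta c chik : R) i :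
  (action mu Ru w theta c chik i = 1%N) <-> c * chik < bbar mu Ru w i * theta.
Proof. by rewrite /action; case: ifP. Qed.

Lemma action_probability_le (R : realType) (d : measure_display) (T : measurableType d)
    (P : probability T R) M (Ru : 'M[R[i]]_M) (w : nat -> T -> 'cV[R[i]]_M)
    (theta : T -> R) (mu rho b c chik : R) (i : nat) :
  hpd Ru -> 0 <= mu -> mu * lambda_max Ru <= 1 ->
  lambda_max (1%:M - (mu%:C)%C *: Ru) <= rho -> 0 < c * chik ->
  measurable_cvfun (w i.-1) -> measurable_fun setT theta -> (forall x, theta x <= 1) ->
  (\int[P]_x (wnorm2 Ru (w i.-1 x))%:E <= b%:E)%E ->
  (P [set x | action mu Ru (fun j => w j x) (theta x) c chik i = 1%N]
   <= (Num.min (rho ^+ 2 * b / (c * chik)) 1)%:E)%E.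
Proof.
move=> Ru_hpd mu_ge0 mu_lmax rho_ge cchi_gt0 mw mtheta theta_le1 w_int.
set A := 1%:M - (mu%:C)%C *: Ru.
set f := fun x => rho ^+ 2 * wnorm2 Ru (w i.-1 x).
set g := fun x => wnorm2 Ru (A *m w i.-1 x) * theta x.
have -> : [set x | action mu Ru (fun j => w j x) (theta x) c chik i = 1%N] =
          [set x | c * chik < g x].
  apply/seteqP; split => x /=; first by move/action_eq1.
  by move=> gx; apply/action_eq1.
apply: (probability_gt_le (f := f)) => //.
- by apply: measurable_funM => //; exact/measurable_wnorm2/measurable_cvfun_mull.
- by apply: measurable_funM => //; exact/measurable_wnorm2.
- by move=> x; rewrite mulr_ge0 ?sqr_ge0 ?wnorm2_ge0.
- move=> x; apply: (@le_trans _ _ (wnorm2 Ru (A *m w i.-1 x))).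
    by rewrite /g ler_piMr ?wnorm2_ge0.
  exact: (wnorm2_contraction Ru_hpd (w i.-1 x) mu_ge0 mu_lmax rho_ge).
under eq_integral do rewrite (EFinM (rho ^+ 2)).
rewrite ge0_integralZl_EFin ?sqr_ge0 //; last exact/measurable_EFinP/measurable_wnorm2.
  by rewrite [leRHS]EFinM lee_wpmul2l ?lee_fin ?sqr_ge0.
by move=> x _; rewrite lee_fin wnorm2_ge0.
Qed.

Unset Implicit Arguments. Set Strict Implicit.

Theorem theorem1 (R : realType) (N M : nat)
  (Ru : 'I_N -> 'M[R[i]]_M) (c delta r : 'I_N -> R) (mu eps eta : R) (i0 : nat)
  (d : measure_display) (T : measurableType d) (P : probability T R)
  (w : nat -> 'I_N -> T -> 'cV[R[i]]_M)
  (theta : nat -> 'I_N -> 'I_N -> T -> R) :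
  (forall k, hpd (Ru k)) ->
  (forall k, 0 < c k) ->
  (forall k, 0 < delta k < 1) ->
  (forall k, 0 < r k < 1) ->
  0 < mu ->
  (forall k, mu * lambda_max (Ru k) <= 1) ->
  0 < eps < 1 ->
  (* wtilde_{k,i} is a random vector of C^M *)
  (forall i k (j : 'I_M),
      measurable_fun setT (fun x => complex.Re (w i k x j ord0)) /\
      measurable_fun setT (fun x => complex.Im (w i k x j ord0))) ->
  (* theta_{lk}(i) is a random variable with values in [eps, 1] *)
  (forall i l k, measurable_fun setT (theta i l k)) ->
  (forall i l k x, eps <= theta i l k x <= 1) ->
  0 < eta ->
  (forall k i, (i0 <= i)%N ->
     (\int[P]_x (wnorm2 (Ru k) (w i k x))%:E <= (eta * mu)%:E)%E) ->
  let chimin := inf (range (fun k => chi (delta k) (r k))) in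
  let rhomax := sup (range (fun k => lambda_max (1%:M - (mu%:C)%C *: Ru k))) in
  let co := eta * mu * rhomax ^+ 2 / chimin in
  forall (k l : 'I_N) (i : nat), (i0.+1 <= i)%N ->
    (P [set x | action mu (Ru k) (fun j => w j k x) (theta i l k x) (c k)
                       (chi (delta k) (r k)) i = 1%N]
     <= (Num.min (co / c k) 1)%:E)%E.
Proof.
move=> Ru_hpd c_gt0 delta01 r01 mu_gt0 mu_lmax _ w_meas theta_meas theta_bnd eta_gt0.
move=> w_int chimin rhomax co k l i lt_i0_i.
have chi_ge1_all j : 1 <= chi (delta j) (r j).
  have /andP[delta_gt0 delta_lt1] := delta01 j; have /andP[_ r_lt1] := r01 j.
  by apply: chi_ge1 r_lt1; rewrite delta_gt0 ltW.
have chimin_gt0 : 0 < chimin.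
  apply: lt_le_trans ltr01 (lb_le_inf _ _); first by exists (chi (delta k) (r k)), k.
  by move=> _ [j _ <-].
have cchi_gt0 : 0 < c k * chi (delta k) (r k).
  by rewrite mulr_gt0 // (lt_le_trans ltr01).
have i0_le : (i0 <= i.-1)%N by rewrite -ltnS prednK // (leq_ltn_trans _ lt_i0_i).
have theta_le1 x : theta i l k x <= 1 by case/andP: (theta_bnd i l k x).
have rho_le := le_sup_range (fun j => lambda_max (1%:M - (mu%:C)%C *: Ru j)) k.
apply: le_trans (action_probability_le (Ru_hpd k) (ltW mu_gt0) (mu_lmax k) rho_le
  cchi_gt0 (fun j => w_meas _ k j) (theta_meas i l k) theta_le1 (w_int k _ i0_le)) _.
rewrite lee_fin le_min2 //.
have -> : co / c k = rhomax ^+ 2 * (eta * mu) / (chimin * c k).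
  by rewrite /co invfM; ring.
apply: ler_wpM2l; first by rewrite mulr_ge0 ?sqr_ge0 ?mulr_ge0 ?ltW.
rewrite lef_pV2 ?posrE ?(mulr_gt0 chimin_gt0) // mulrC.
exact: (ler_wpM2l (ltW (c_gt0 k)) (ge_inf_range (fun j => chi (delta j) (r j)) k)).
Qed.
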